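(* Let $K$ be an odd prime and $p,m\in\mathbb Z$ with $m\ge0$. Then $$\sum{}'_{\alpha}\check q^{\,p\alpha^2}\alpha^{2m}=x^{\max(0,\frac{K-1}2-m)}\,w\quad\text{for some }w\in\mathbb Z[\check q].$$
   Context: $\check q=e^{2\pi i/K}$, $x=\check q-1$. $\sum'_\alpha$ denotes the sum over odd integers $\alpha$ with $-K\le\alpha\le K$, where the two terms $\alpha=\pm K$ are each weighted by $\frac12$. *)

From HB Require Import structures.
From mathcomp Require Import all_boot all_order all_algebra.
From mathcomp Require Import complex.
From mathcomp Require Import all_classical all_reals all_analysis.
Set Implicit Arguments. Unset Strict Implicit. Unset Printing Implicit Defensive.
Import Order.TTheory GRing.Theory Num.Theory.
Local Open Scope ring_scope.
Local Open Scope complex_scope.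

Definition qcheck (R : realType) (K : nat) : complex R :=
  (cos (2 * pi / K%:R))%:C + 'i * (sin (2 * pi / K%:R))%:C.

Definition in_Zq (R : realType) (q z : complex R) : Prop :=
  exists P : {poly int}, z = (map_poly intr P).[q].

Definition sumw (R : realType) (K : nat) (a : int) : complex R :=
  if (a == K%:Z) || (a == - K%:Z) then 2^-1 else 1.

(* \sum'_alpha F alpha : over odd integers alpha with -K <= alpha <= K,
   alpha = i - K for i = 0 .. 2K, endpoint terms weighted by 1/2 *)
Definition sumprime (R : realType) (K : nat) (F : int -> complex R) : complex R :=
  \sum_(i < (2 * K).+1 | ~~ (2 %| (i%:Z - K%:Z))%Z)
     sumw R K (i%:Z - K%:Z) * F (i%:Z - K%:Z).

(* Write x = q - 1.  Since the summand is even in alpha, the two half-weighted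
   endpoints merge and the primed sum becomes a sum over alpha = 2k - K, k < K.
   Reducing the exponent p alpha^2 modulo K to M_k < K and expanding
   q^M_k = (1 + x)^M_k gives sum_(j < K) c_j x^j with integer coefficients
   c_j = sum_k C(M_k, j) alpha_k^(2m).  Modulo K, j! C(M_k, j) alpha_k^(2m) is a
   polynomial in k of degree 2j + 2m, and power sums sum_(k < K) k^e vanish in
   F_K for e < K - 1, so K divides c_j when 2j + 2m < K - 1.  Finally
   (1 + x)^K = 1 shows K in x^(K-1) Z[q], which supplies the missing powers of x. *)

From HB Require Import structures.
From mathcomp Require Import all_boot all_order all_algebra.
From mathcomp Require Import complex.
From mathcomp Require Import all_classical all_reals all_analysis.
From mathcomp Require Import ring zify.
Set Implicit Arguments. Unset Strict Implicit. Unset Printing Implicit Defensive.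
Import Order.TTheory GRing.Theory Num.Theory.
Local Open Scope ring_scope.

Section Cis.
Local Open Scope complex_scope.

Definition cis {R : realType} (t : R) : complex R := (cos t)%:C + 'i * (sin t)%:C.

Lemma cisE (R : realType) (t : R) : cis t = (cos t +i* sin t)%C.
Proof. by rewrite /cis; simpc. Qed.

Lemma cisD (R : realType) (s t : R) : cis s * cis t = cis (s + t).
Proof.
by rewrite !cisE; simpc; rewrite cosD sinD (addrC (_ * sin t)) (mulrC (sin s)).
Qed.

Lemma cisXn (R : realType) (t : R) n : cis t ^+ n = cis (t *+ n).
Proof.
elim: n => [|n IHn]; first by rewrite expr0 mulr0n cisE cos0 sin0.
by rewrite exprS IHn cisD mulrS.
Qed.

Lemma qcheck_expK (R : realType) K : (0 < K)%N -> qcheck R K ^+ K = 1.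
Proof.
move=> K_gt0; rewrite -/(cis _) cisXn.
have -> : (2 * pi / K%:R) *+ K = pi *+ 2 :> R.
  by rewrite -mulr_natr mulfVK ?pnatr_eq0 -?lt0n // mulrC mulr_natr.
by rewrite cisE cos2pi sin2pi.
Qed.

Lemma qcheck_neq1 (R : realType) K : (2 < K)%N -> qcheck R K != 1.
Proof.
move=> K_gt2; rewrite /qcheck -/(cis _) cisE.
apply/eqP => /(congr1 (@complex.Im R)) /=.
apply/eqP; rewrite gt_eqF // sin_gt0_pi //.
have K_gt0 : (0 : R) < K%:R by rewrite ltr0n; case: K K_gt2.
rewrite divr_gt0 ?mulr_gt0 ?pi_gt0 //= ltr_pdivrMr // mulrC ltr_pM2l ?pi_gt0 //.
by rewrite ltr_nat.
Qed.

End Cis.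

Section IntegerPolynomialsInQ.
Variables (R : realType) (q : complex R).

Definition Zq : {pred complex R} := fun z => `[< in_Zq q z >].

Fact Zq_subring_closed : subring_closed Zq.
Proof.
split; first by apply/asboolP; exists 1; rewrite rmorph1 hornerC.
  move=> _ _ /asboolP[P ->] /asboolP[Q ->]; apply/asboolP; exists (P - Q).
  by rewrite rmorphB hornerD hornerN.
move=> _ _ /asboolP[P ->] /asboolP[Q ->]; apply/asboolP; exists (P * Q).
by rewrite rmorphM hornerM.
Qed.
HB.instance Definition _ := GRing.isSubringClosed.Build (complex R) Zq
  Zq_subring_closed.

Lemma Zq_q : q \in Zq.
Proof. by apply/asboolP; exists 'X; rewrite map_polyX hornerX. Qed.

Definition xZq n : {pred complex R} :=
  fun z => `[< exists2 w, w \in Zq & z = (q - 1) ^+ n * w >].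

Fact xZq_zmod_closed n : zmod_closed (xZq n).
Proof.
split; first by apply/asboolP; exists 0; rewrite ?rpred0 ?mulr0.
move=> _ _ /asboolP[u Zu ->] /asboolP[v Zv ->]; apply/asboolP.
by exists (u - v); rewrite ?rpredB // mulrBr.
Qed.
HB.instance Definition _ n := GRing.isZmodClosed.Build (complex R) (xZq n)
  (xZq_zmod_closed n).

Lemma xZqMr n z w : z \in xZq n -> w \in Zq -> z * w \in xZq n.
Proof.
move=> /asboolP[u Zu ->] Zw; apply/asboolP.
by exists (u * w); rewrite ?rpredM // mulrA.
Qed.

Lemma xZq_exprM n j w : (n <= j)%N -> w \in Zq -> (q - 1) ^+ j * w \in xZq n.
Proof.
move=> le_nj Zw; apply/asboolP; exists ((q - 1) ^+ (j - n) * w).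
  by rewrite rpredM // rpredX // rpredB ?Zq_q ?rpred1.
by rewrite mulrA -exprD subnKC.
Qed.

Lemma xZqW n j z : (n <= j)%N -> z \in xZq j -> z \in xZq n.
Proof. by move=> le_nj /asboolP[w Zw ->]; apply: xZq_exprM. Qed.

Section PrimeOrder.
Variable K : nat.
Hypotheses (K_prime : prime K) (qK : q ^+ K = 1) (q_neq1 : q != 1).

(* [(1 + x)^K = 1] with [x = q - 1], divided by [x]. *)
Lemma natr_prime_expansion :
  K%:R = - \sum_(i < K.-1) (q - 1) ^+ i.+1 *+ 'C(K, i.+2).
Proof.
have x_neq0 : q - 1 != 0 by rewrite subr_eq0.
have := exprD1n (q - 1) K; rewrite subrK qK big_ord_recl expr0 bin0 mulr1n.
move=> /esym/eqP; rewrite -subr_eq0 addrC addKr.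
case: K K_prime => // K' _; rewrite big_ord_recl /= expr1 bin1 addr_eq0.
rewrite -[_ *+ K'.+1]mulr_natr => /eqP Kx.
apply: (mulfI x_neq0); rewrite Kx mulrN mulr_sumr; congr -%R.
by apply: eq_bigr => i _; rewrite mulrnAr -exprS.
Qed.

Lemma natr_prime_in_xZq : K%:R \in xZq K.-1.
Proof.
suff: forall r, (r <= K.-1)%N -> K%:R \in xZq r by apply.
elim=> [|r IHr] le_rK.
  by apply/asboolP; exists K%:R; rewrite ?rpred_nat ?expr0 ?mul1r.
have /asboolP[w Zw Kw] := IHr (ltnW le_rK).
rewrite natr_prime_expansion rpredN rpred_sum // => i _.
have [lt_iK|] := ltnP i.+2 K.
  have /dvdnP[b ->] : (K %| 'C(K, i.+2))%N by rewrite prime_dvd_bin ?lt_iK.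
  rewrite -mulr_natr natrM Kw.
  rewrite (_ : _ * _ = (q - 1) ^+ (r + i.+1) * (b%:R * w)); last first.
    by rewrite exprD; ring.
  by rewrite xZq_exprM ?rpredM ?rpred_nat // addnS ltnS leq_addr.
move=> le_Ki; have lt_iK := ltn_ord i.
have -> : 'C(K, i.+2) = 1 by rewrite (_ : i.+2 = K) ?binn //; lia.
by rewrite -[_ *+ 1]mulr1 xZq_exprM ?rpred1 //; lia.
Qed.

End PrimeOrder.
End IntegerPolynomialsInQ.

Section PowerSumsPchar.
Variables (F : fieldType) (K : nat).
Hypothesis K_pchar : K \in [pchar F].

Lemma sum_natr_expr_pchar e : (e.+1 < K)%N -> \sum_(k < K) (k%:R : F) ^+ e = 0.
Proof.
elim/ltn_ind: e => e IHe lt_eK.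
have telescope0 : \sum_(0 <= k < K) ((k.+1%:R : F) ^+ e.+1 - k%:R ^+ e.+1) = 0.
  rewrite (telescope_sumr (fun k => (k%:R : F) ^+ e.+1)) //.
  by rewrite (pcharf0 K_pchar) expr0n subr0.
have : \sum_(i < e.+1) (\sum_(k < K) (k%:R : F) ^+ i) *+ 'C(e.+1, i) = 0.
  rewrite -[RHS]telescope0 big_mkord; under eq_bigr => i _ do rewrite -sumrMnl.
  rewrite exchange_big /=; apply: eq_bigr => k _.
  by rewrite -natr1 exprD1n [in RHS]big_ord_recr /= binn mulr1n addrK.
rewrite big_ord_recr /= big1 ?add0r => [|i _]; last first.
  by rewrite IHe ?mul0rn // (ltn_trans _ lt_eK) // ltnS ltn_ord.
move=> /eqP; rewrite -mulr_natr mulf_eq0 => /orP[/eqP //|].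
rewrite binSn -(dvdn_pcharf K_pchar) => /(dvdn_leq (ltn0Sn _)).
by rewrite leqNgt lt_eK.
Qed.

Lemma sum_horner_natr_pchar (P : {poly F}) :
  (size P < K)%N -> \sum_(k < K) P.[k%:R] = 0.
Proof.
move=> lt_PK; under eq_bigr => k _ do rewrite horner_coef.
rewrite exchange_big big1 //= => i _.
by rewrite -mulr_sumr sum_natr_expr_pchar ?mulr0 // (leq_trans _ lt_PK) ?ltnS.
Qed.

End PowerSumsPchar.

Lemma prime_dvdn_fact p n : prime p -> (p %| n`!)%N = (p <= n)%N.
Proof.
move=> p_prime; elim: n => [|n IHn].
  by rewrite fact0 dvdn1 leqn0; case: p p_prime => [|[]].
rewrite factS Euclid_dvdM // IHn; have [le_pn|lt_np] := leqP p n.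
  by rewrite orbT (leq_trans le_pn).
rewrite orbF; apply/idP/idP => [/dvdn_leq -> //|le_pn1].
by have -> : p = n.+1 by lia.
Qed.

Lemma natr_ffact (R : pzRingType) (M j : nat) :
  (M ^_ j)%:R = \prod_(i < j) (M%:R - i%:R : R).
Proof.
elim: j => [|j IHj]; first by rewrite big_ord0.
rewrite ffactnSr natrM IHj big_ord_recr /=; have [le_jM|lt_Mj] := leqP j M.
  by rewrite natrB.
by rewrite -IHj ffact_small // !mul0r.
Qed.

Lemma intr_modz (R : pzRingType) (K : nat) (z : int) :
  K%:R = 0 :> R -> ((z %% K)%Z)%:~R = z%:~R :> R.
Proof.
move=> K0; rewrite {2}(divz_eq z K) [in RHS]intrD [in RHS]intrM.
by rewrite -[(K%:Z)%:~R]pmulrn K0 mulr0 add0r.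
Qed.

(* For odd [K], [k < K] enumerates the odd [alpha] in [[-K, K)] as [2k - K]. *)
Definition alpha (K k : nat) : int := k.*2%:Z - K%:Z.

Definition expmod (K : nat) (p : int) (k : nat) : nat :=
  `|(p * alpha K k ^+ 2) %% K|%Z%N.

Definition binom_coef (K : nat) (p : int) (m j : nat) : int :=
  \sum_(k < K) 'C(expmod K p k, j)%:Z * alpha K k ^+ (2 * m).

Section ReductionModK.
Variables (R : comNzRingType) (K : nat).
Hypothesis K_pchar : K \in [pchar R].

Lemma intr_alpha k : (alpha K k)%:~R = 2 * k%:R :> R.
Proof. by rewrite intrB -!pmulrn (pcharf0 K_pchar) subr0 -mul2n natrM. Qed.

Lemma natr_binom_expmod p j k :
  ('C(expmod K p k, j) * j`!)%:R =
  \prod_(i < j) (p%:~R * 4 * k%:R ^+ 2 - i%:R) :> R.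
Proof.
have K_neq0 : K%:Z != 0 by rewrite eqz_nat -lt0n prime_gt0 ?(pcharf_prime K_pchar).
rewrite bin_ffact natr_ffact; apply: eq_bigr => i _; congr (_ - _).
rewrite pmulrn /expmod gez0_abs ?modz_ge0 // intr_modz ?(pcharf0 K_pchar) //.
by rewrite intrM rmorphXn /= intr_alpha; ring.
Qed.

End ReductionModK.

Lemma size_prod_scaleX2_subC (R : nzRingType) (c : R) (a : nat -> R) j :
  (size (\prod_(i < j) (c *: 'X^2 - (a i)%:P))%R <= (2 * j).+1)%N.
Proof.
elim: j => [|j IHj]; first by rewrite big_ord0 size_poly1.
rewrite big_ord_recr /=; apply: leq_trans (size_polyMleq _ _) _.
have size_factor : (size (c *: 'X^2 - (a j)%:P)%R <= 3)%N.
  rewrite (leq_trans (size_polyD _ _)) // geq_max size_polyN size_polyC.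
  by rewrite (leq_trans (size_scale_leq _ _)) ?size_polyXn //; case: (_ != 0).
by move: IHj size_factor; set s := size _; set t := size _; lia.
Qed.

Lemma dvdz_binom_coef K p m j :
  prime K -> (2 * j + 2 * m < K.-1)%N -> (K%:Z %| binom_coef K p m j)%Z.
Proof.
move=> K_prime lt_jmK; have K_pchar := pchar_Fp K_prime.
rewrite (dvdz_pcharf K_pchar); apply/eqP.
have fact_neq0 : (j`!%:R : 'F_K) != 0.
  by rewrite -(dvdn_pcharf K_pchar) prime_dvdn_fact // -ltnNge; lia.
(* [j! C(expmod K p k, j) alpha^(2m) = Q.[k]] in [F_K], with [size Q < K]. *)
pose Q : {poly 'F_K} := (2 ^+ (2 * m) *: 'X^(2 * m)) *
  \prod_(i < j) ((p%:~R * 4) *: 'X^2 - (i%:R)%:P).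
apply: (mulIf fact_neq0); rewrite mul0r -(@sum_horner_natr_pchar _ _ K_pchar Q).
  rewrite rmorph_sum mulr_suml; apply: eq_bigr => k _.
  rewrite rmorphM /= mulrAC pmulrn -natrM natr_binom_expmod //.
  rewrite rmorphXn /= intr_alpha //.
  rewrite hornerM hornerZ hornerXn horner_prod.
  under [in RHS]eq_bigr => i _ do rewrite hornerD hornerN hornerZ hornerXn hornerC.
  by rewrite exprMn mulrC.
apply: leq_ltn_trans (size_polyMleq _ _) _.
have := size_scale_leq (2 ^+ (2 * m)) ('X^(2 * m) : {poly 'F_K}).
rewrite size_polyXn.
have := @size_prod_scaleX2_subC 'F_K (p%:~R * 4) (fun i => i%:R) j.
set s := size _; set t := size _; lia.
Qed.

Lemma big_ord_double (V : nmodType) (f : nat -> V) n :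
  \sum_(i < n.*2) f i = \sum_(k < n) (f k.*2 + f k.*2.+1).
Proof.
elim: n => [|n IHn]; first by rewrite !big_ord0.
by rewrite doubleS !big_ord_recr /= IHn addrA.
Qed.

Lemma dvdz2_subn (i K : nat) : (2 %| i%:Z - K%:Z)%Z = (odd i == odd K).
Proof.
by rewrite -eqz_mod_dvd !modz_nat eqz_nat !modn2; case: (odd i); case: (odd K).
Qed.

Section PrimedSum.
Variable R : realType.

Lemma sumprime_alpha K (G : int -> complex R) : odd K ->
  sumprime K G = \sum_(k < K.+1) sumw R K (alpha K k) * G (alpha K k).
Proof.
move=> K_odd.
pose f i := if ~~ (2 %| i%:Z - K%:Z)%Z
  then sumw R K (i%:Z - K%:Z) * G (i%:Z - K%:Z) else 0.
rewrite /sumprime big_mkcond mul2n.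
transitivity (\sum_(i < K.*2.+1) f i) => //.
rewrite big_ord_recr big_ord_double [in RHS]big_ord_recr /=; congr (_ + _).
  by apply: eq_bigr => k _; rewrite /f !dvdz2_subn /= odd_double K_odd addr0.
by rewrite /f dvdz2_subn odd_double K_odd.
Qed.

Lemma sumw_alpha K k : (0 < k < K)%N -> sumw R K (alpha K k) = 1.
Proof.
move=> /andP[k_gt0 lt_kK]; rewrite /sumw ifN // negb_or /alpha -muln2.
by apply/andP; split; apply/eqP; lia.
Qed.

Lemma sumprime_even K (G : int -> complex R) : odd K ->
  G (- K%:Z) = G K%:Z -> sumprime K G = \sum_(k < K) G (alpha K k).
Proof.
move=> K_odd G_even; rewrite sumprime_alpha //.
have alphaK : alpha K K = K by rewrite /alpha -addnn PoszD addrK.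
have alpha0 : alpha K 0 = - K%:Z by rewrite /alpha sub0r.
have [wK w0] : sumw R K K%:Z = 2^-1 /\ sumw R K (- K%:Z) = 2^-1.
  by rewrite /sumw !eqxx orbT.
case: K K_odd G_even alphaK alpha0 wK w0 => // K' _ G_even alphaK alpha0 wK w0.
rewrite big_ord_recr big_ord_recl [in RHS]big_ord_recl /=.
rewrite alphaK alpha0 wK w0 G_even.
rewrite (eq_bigr (fun i : 'I_K' => G (alpha K'.+1 i.+1))) => [|i _]; last first.
  by rewrite sumw_alpha ?mul1r // ltnS ltn_ord.
by field.
Qed.

End PrimedSum.

Lemma exprz_modz (R : comUnitRingType) (x : R) (K : nat) (z : int) :
  (0 < K)%N -> x ^+ K = 1 -> x ^ z = x ^+ `|z %% K|%Z%N.
Proof.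
move=> K_gt0 xK; have x_unit : x \is a GRing.unit.
  by rewrite -(unitrX_pos _ K_gt0) xK unitr1.
rewrite {1}(divz_eq z K) exprzDr // [((_ %/ _)%Z * _)%R]mulrC -exprz_exp.
rewrite -exprnP xK exp1rz mul1r.
by rewrite exprnP gez0_abs ?modz_ge0 // eqz_nat -lt0n.
Qed.

Lemma exprD1n_widen (R : pzRingType) (x : R) (M K : nat) : (M < K)%N ->
  (x + 1) ^+ M = \sum_(j < K) x ^+ j *+ 'C(M, j).
Proof.
move=> lt_MK; rewrite exprD1n (big_ord_widen K (fun j => x ^+ j *+ 'C(M, j))) //.
rewrite big_mkcond; apply: eq_bigr => j _; case: ltnP => // le_Mj.
by rewrite bin_small ?mulr0n.
Qed.

Lemma expmod_lt K p k : (0 < K)%N -> (expmod K p k < K)%N.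
Proof.
move=> K_gt0; rewrite /expmod -ltz_nat gez0_abs ?modz_ge0 ?ltz_pmod //.
by rewrite eqz_nat -lt0n.
Qed.

Lemma sum_qexp_binom_coef (R : comUnitRingType) (q : R) K p m :
  (0 < K)%N -> q ^+ K = 1 ->
  \sum_(k < K) q ^ (p * alpha K k ^+ 2) * (alpha K k)%:~R ^+ (2 * m) =
  \sum_(j < K) (q - 1) ^+ j * (binom_coef K p m j)%:~R.
Proof.
move=> K_gt0 qK.
under eq_bigr => k _ do rewrite (exprz_modz _ K_gt0 qK) -[q in q ^+ _](subrK 1)
  (exprD1n_widen _ (expmod_lt p k K_gt0)) mulr_suml.
rewrite exchange_big /=; apply: eq_bigr => j _.
rewrite rmorph_sum mulr_sumr; apply: eq_bigr => k _.
by rewrite -mulr_natr -mulrA rmorphM rmorphXn /= -pmulrn.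
Qed.

Theorem lemma2p1 (R : realType) (K : nat) (p : int) (m : nat) :
  prime K -> odd K ->
  exists w : complex R, in_Zq (qcheck R K) w /\
    sumprime K (fun a : int => qcheck R K ^ (p * a ^+ 2) * (a%:~R) ^+ (2 * m))
    = (qcheck R K - 1) ^+ (K.-1./2 - m)%N * w.
Proof.
move=> K_prime K_odd.
have K_gt2 : (2 < K)%N by case: K K_prime K_odd => [|[|[|K]]].
have K_gt0 : (0 < K)%N by apply: ltn_trans K_gt2.
have K_half : K.-1./2.*2 = K.-1 by rewrite even_halfK // -oddS prednK.
have qK := qcheck_expK R K_gt0; have q_neq1 := qcheck_neq1 R K_gt2.
set q := qcheck R K in qK q_neq1 *; set n := (K.-1./2 - m)%N.
rewrite sumprime_even //; last by rewrite rmorphN /= !exprM !sqrrN.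
rewrite sum_qexp_binom_coef //.
suff /asboolP[w /asboolP Zw ->] :
  \sum_(j < K) (q - 1) ^+ j * (binom_coef K p m j)%:~R \in xZq q n by exists w.
apply: rpred_sum => j _; have [le_nj|lt_jn] := leqP n j.
  by rewrite xZq_exprM ?rpred_int.
have /dvdzP[d ->] : (K%:Z %| binom_coef K p m j)%Z.
  by apply: dvdz_binom_coef => //; move: K_half lt_jn; rewrite /n -muln2; lia.
rewrite intrM -pmulrn mulrA mulrC; apply: xZqMr.
  by apply: (xZqW _ (natr_prime_in_xZq K_prime qK q_neq1)); rewrite /n; lia.
by rewrite rpredM ?rpredX ?rpredB ?Zq_q ?rpred1 ?rpred_int.
Qed.
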